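(* Let $A$ be an MV-algebra such that the set $\operatorname{Der}(A)$ of $(\odot,\vee)$-derivations on $A$ is closed under pointwise $\wedge$ (so that it is a lattice under pointwise $\vee,\wedge$). Then $\chi^{(A)}=\{\chi^{(u)}:u\in A\}$ is a filter of the lattice $\operatorname{Der}(A)$, i.e. it is nonempty, closed under $\wedge$, and if $\chi^{(u)}\preceq d$ with $d\in\operatorname{Der}(A)$ then $d\in\chi^{(A)}$; here $\chi^{(u)}(1)=u$ and $\chi^{(u)}(x)=x$ for $x\neq 1$.
   Context: An MV-algebra is an algebra $(A,\oplus,{}^*,0)$ of type $(2,1,0)$ satisfying: $x\oplus(y\oplus z)=(x\oplus y)\oplus z$, $x\oplus y=y\oplus x$, $x\oplus 0=x$, $x^{**}=x$, $x\oplus 0^*=0^*$, $(x^*\oplus y)^*\oplus y=(y^*\oplus x)^*\oplus x$. Put $1=0^*$ and $x\odot y=(x^*\oplus y^* )^*$. The natural order is $x\le y$ iff $x^*\oplus y=1$, with lattice operations $x\vee y=(x\odot y^* )\oplus y$, $x\wedge y=x\odot(x^*\oplus y)$. A $(\odot,\vee)$-derivation on $A$ is a map $d:A\to A$ with $d(x\odot y)=(d(x)\odot y)\vee(x\odot d(y))$ for all $x,y\in A$. Maps are ordered by $d\preceq d'$ iff $d(x)\le d'(x)$ for all $x$, with pointwise $\vee,\wedge$. *)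

From Stdlib Require Import ClassicalEpsilon.

Record MVAlgebra := {
  mv_car :> Type;
  mv_oplus : mv_car -> mv_car -> mv_car;
  mv_star : mv_car -> mv_car;
  mv_zero : mv_car;
  mv_assoc : forall x y z, mv_oplus x (mv_oplus y z) = mv_oplus (mv_oplus x y) z;
  mv_comm : forall x y, mv_oplus x y = mv_oplus y x;
  mv_zero_r : forall x, mv_oplus x mv_zero = x;
  mv_starK : forall x, mv_star (mv_star x) = x;
  mv_one_abs : forall x, mv_oplus x (mv_star mv_zero) = mv_star mv_zero;
  mv_luk : forall x y,
    mv_oplus (mv_star (mv_oplus (mv_star x) y)) y
    = mv_oplus (mv_star (mv_oplus (mv_star y) x)) x
}.

Section MVDefs.
Variable A : MVAlgebra.

Definition mv_one : A := mv_star A (mv_zero A).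
Definition mv_odot (x y : A) : A :=
  mv_star A (mv_oplus A (mv_star A x) (mv_star A y)).
Definition mv_le (x y : A) : Prop := mv_oplus A (mv_star A x) y = mv_one.
Definition mv_join (x y : A) : A := mv_oplus A (mv_odot x (mv_star A y)) y.
Definition mv_meet (x y : A) : A := mv_odot x (mv_oplus A (mv_star A x) y).

Definition is_derivation (d : A -> A) : Prop :=
  forall x y, d (mv_odot x y) = mv_join (mv_odot (d x) y) (mv_odot x (d y)).

Definition map_meet (d1 d2 : A -> A) : A -> A := fun x => mv_meet (d1 x) (d2 x).
Definition map_le (d1 d2 : A -> A) : Prop := forall x, mv_le (d1 x) (d2 x).

Definition chi (u : A) : A -> A :=
  fun x => if excluded_middle_informative (x = mv_one) then u else x.

Definition in_chiA (d : A -> A) : Prop := exists u : A, forall x, d x = chi u x.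
End MVDefs.

(* The maps chi^(u) (equal to u at 1 and the identity elsewhere)
   are compared with derivations through two elementary facts:
   - since x (.) y = 1 forces x = y = 1, every chi^(u) is a derivation: off
     the point (1,1) the Leibniz rule reduces to x (.) y = x (.) y, and at
     the points with one coordinate 1 it reduces to y v (u (.) y) = y;
   - every derivation d satisfies d 0 = 0 and hence d x <= x, because
     d (x (.) x* ) = d 0 = 0 forces d x (.) x* = 0.
   Consequently chi^(u) /\ chi^(v) = chi^(u /\ v) pointwise (meet is
   idempotent), and a derivation d above some chi^(u) satisfies
   x <= d x <= x for x <> 1, so d = chi^(d 1).  The
   hypothesis that Der(A) is closed under meets only makes Der(A) a lattice;
   the filter properties themselves do not depend on it. *)

From Stdlib Require Import ClassicalEpsilon.

Section MVIdentities.
Variable A : MVAlgebra.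
Local Notation "x ⊕ y" := (mv_oplus A x y) (at level 50, left associativity).
Local Notation "x ^*" := (mv_star A x) (at level 30).
Local Notation "0" := (mv_zero A).
Local Notation "1" := (mv_one A).
Local Notation "x ⊙ y" := (mv_odot A x y) (at level 40, left associativity).

Lemma one_star : 1 ^* = 0.
Proof. apply mv_starK. Qed.

Lemma zero_l (x : A) : 0 ⊕ x = x.
Proof. rewrite mv_comm. apply mv_zero_r. Qed.

Lemma one_l (x : A) : 1 ⊕ x = 1.
Proof. rewrite mv_comm. apply mv_one_abs. Qed.

(* x* is a complement of x for (+); the Lukasiewicz axiom at y = 1. *)
Lemma compl_l (x : A) : x ^* ⊕ x = 1.
Proof.
  pose proof (mv_luk A x 1) as H.
  rewrite !mv_one_abs, one_star, zero_l in H.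
  exact (eq_sym H).
Qed.

Lemma star_inj (x y : A) : x ^* = y ^* -> x = y.
Proof. intro H. rewrite <- (mv_starK A x), H. apply mv_starK. Qed.

Lemma oplus_eq0 (a b : A) : a ⊕ b = 0 -> a = 0.
Proof.
  intro H.
  assert (E : a ^* ⊕ (a ⊕ b) = 1) by (rewrite mv_assoc, compl_l; apply one_l).
  rewrite H, mv_zero_r in E.
  apply star_inj. rewrite E. reflexivity.
Qed.

Lemma odot_eq1 (x y : A) : x ⊙ y = 1 -> x = 1.
Proof.
  intro H. apply star_inj in H. apply oplus_eq0 in H.
  rewrite <- (mv_starK A x), H. reflexivity.
Qed.

Lemma odot_comm (x y : A) : x ⊙ y = y ⊙ x.
Proof. unfold mv_odot. rewrite mv_comm. reflexivity. Qed.

Lemma odot_assoc (x y z : A) : x ⊙ (y ⊙ z) = x ⊙ y ⊙ z.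
Proof. unfold mv_odot. rewrite !mv_starK, mv_assoc. reflexivity. Qed.

Lemma odot_1 (x : A) : x ⊙ 1 = x.
Proof. unfold mv_odot. rewrite one_star, mv_zero_r. apply mv_starK. Qed.

Lemma odot_1l (x : A) : 1 ⊙ x = x.
Proof. rewrite odot_comm. apply odot_1. Qed.

Lemma odot_0 (x : A) : x ⊙ 0 = 0.
Proof. unfold mv_odot. fold (mv_one A). rewrite mv_one_abs. apply one_star. Qed.

Lemma odot_compl (x : A) : x ⊙ x ^* = 0.
Proof. unfold mv_odot. rewrite mv_starK, compl_l. apply one_star. Qed.

Lemma le_of_odot_compl (a b : A) : a ⊙ b ^* = 0 -> mv_le A a b.
Proof.
  unfold mv_le, mv_odot. rewrite mv_starK. intro H.
  rewrite <- (mv_starK A (a ^* ⊕ b)), H. reflexivity.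
Qed.

Lemma odot_le (u y : A) : mv_le A (u ⊙ y) y.
Proof.
  apply le_of_odot_compl. rewrite <- odot_assoc, odot_compl. apply odot_0.
Qed.

Lemma join_comm (x y : A) : mv_join A x y = mv_join A y x.
Proof. unfold mv_join, mv_odot. rewrite !mv_starK. apply mv_luk. Qed.

Lemma join_idem (u : A) : mv_join A u u = u.
Proof. unfold mv_join. rewrite odot_compl. apply zero_l. Qed.

Lemma meet_idem (x : A) : mv_meet A x x = x.
Proof. unfold mv_meet. rewrite compl_l. apply odot_1. Qed.

Lemma join_le (x y : A) : mv_le A x y -> mv_join A x y = y.
Proof.
  unfold mv_le, mv_join, mv_odot. rewrite mv_starK. intro H.
  rewrite H, one_star. apply zero_l.
Qed.

Lemma le_antisym (x y : A) : mv_le A x y -> mv_le A y x -> x = y.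
Proof.
  intros Hxy Hyx. rewrite <- (join_le _ _ Hxy), join_comm. exact (eq_sym (join_le _ _ Hyx)).
Qed.

Lemma join_eq0 (a b : A) : mv_join A a b = 0 -> a = 0.
Proof.
  unfold mv_join. intro H.
  assert (Hb : b = 0) by (rewrite mv_comm in H; exact (oplus_eq0 _ _ H)).
  subst b. apply oplus_eq0 in H. fold (mv_one A) in H. rewrite odot_1 in H. exact H.
Qed.

End MVIdentities.

Section Derivations.
Variable A : MVAlgebra.
Variable d : A -> A.
Hypothesis d_der : is_derivation A d.

(* Every derivation fixes 0: d 0 = d (0 (.) 0) = d 0 (.) 0 v 0 (.) d 0 = 0. *)
Lemma derivation_zero : d (mv_zero A) = mv_zero A.
Proof.
  rewrite <- (odot_0 A (mv_zero A)), d_der, !odot_0, odot_comm, odot_0.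
  apply join_idem.
Qed.

(* Every derivation is decreasing: d x (.) x* = 0 since it lies below d 0. *)
Lemma derivation_le (x : A) : mv_le A (d x) x.
Proof.
  apply le_of_odot_compl.
  pose proof (d_der x (mv_star A x)) as E.
  rewrite odot_compl, derivation_zero in E.
  exact (join_eq0 _ _ _ (eq_sym E)).
Qed.

End Derivations.

Section Chi.
Variable A : MVAlgebra.

Lemma chi_one (u : A) : chi A u (mv_one A) = u.
Proof. unfold chi. destruct (excluded_middle_informative _); congruence. Qed.

Lemma chi_other (u x : A) : x <> mv_one A -> chi A u x = x.
Proof. intro. unfold chi. destruct (excluded_middle_informative _); congruence. Qed.

Lemma chi_derivation (u : A) : is_derivation A (chi A u).
Proof.
  intros x y.
  destruct (excluded_middle_informative (x = mv_one A)) as [-> | Hx];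
  destruct (excluded_middle_informative (y = mv_one A)) as [-> | Hy].
  - rewrite odot_1, !chi_one, odot_1, odot_1l. exact (eq_sym (join_idem A u)).
  - rewrite odot_1l, chi_one, (chi_other _ _ Hy), odot_1l.
    exact (eq_sym (join_le A _ _ (odot_le A u y))).
  - rewrite odot_1, chi_one, (chi_other _ _ Hx), odot_1, join_comm, odot_comm.
    exact (eq_sym (join_le A _ _ (odot_le A u x))).
  - assert (Hxy : mv_odot A x y <> mv_one A) by (intro E; exact (Hx (odot_eq1 A _ _ E))).
    rewrite !chi_other by assumption. exact (eq_sym (join_idem A _)).
Qed.

Lemma chi_meet (u v x : A) :
  map_meet A (chi A u) (chi A v) x = chi A (mv_meet A u v) x.
Proof.
  unfold map_meet.
  destruct (excluded_middle_informative (x = mv_one A)) as [-> | Hx].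
  - rewrite !chi_one. reflexivity.
  - rewrite !chi_other by assumption. apply meet_idem.
Qed.

Lemma derivation_above_chi (u : A) (d : A -> A) :
  is_derivation A d -> map_le A (chi A u) d -> forall x, d x = chi A (d (mv_one A)) x.
Proof.
  intros Hd Hle x.
  destruct (excluded_middle_informative (x = mv_one A)) as [-> | Hx].
  - rewrite chi_one. reflexivity.
  - rewrite chi_other by assumption.
    specialize (Hle x). rewrite chi_other in Hle by assumption.
    exact (le_antisym A _ _ (derivation_le A d Hd x) Hle).
Qed.

End Chi.

Theorem proposition5p13 (A : MVAlgebra) :
  (forall d1 d2 : A -> A, is_derivation A d1 -> is_derivation A d2 ->
     is_derivation A (map_meet A d1 d2)) ->
  (* chi^(A) is a subset of Der(A) *)
  (forall u : A, is_derivation A (chi A u)) /\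
  (* nonempty *)
  (exists d : A -> A, in_chiA A d) /\
  (* closed under pointwise meet *)
  (forall d1 d2 : A -> A, in_chiA A d1 -> in_chiA A d2 ->
     in_chiA A (map_meet A d1 d2)) /\
  (* upward closed in Der(A) *)
  (forall (u : A) (d : A -> A), is_derivation A d ->
     map_le A (chi A u) d -> in_chiA A d).
Proof.
  intros _. split; [|split; [|split]].
  - exact (chi_derivation A).
  - exists (chi A (mv_zero A)), (mv_zero A). reflexivity.
  - intros d1 d2 [u Hu] [v Hv]. exists (mv_meet A u v). intro x.
    unfold map_meet. rewrite Hu, Hv. exact (chi_meet A u v x).
  - intros u d Hd Hle. exists (d (mv_one A)). exact (derivation_above_chi A u d Hd Hle).
Qed.
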